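(* Let $E=(A\subset B)\in\mathcal S$ have Klein tableau $\Pi=[\gamma^0,\ldots,\gamma^e;\varphi^2,\ldots,\varphi^e]$ and let $s\le e$. Then the embedding $E\!\downarrow_s=(p^sA\subset B)$ has Klein tableau $$\Pi(E\!\downarrow_s)=[\gamma^s,\ldots,\gamma^e;\varphi^{2+s},\ldots,\varphi^e]=\Pi|_{e-s}^e.$$
   Context: Let $R$ be a commutative principal ideal domain, $p$ a generator of a maximal ideal, $k=R/(p)$. A $p$-module is a finite-length $R$-module annihilated by some power of $p$. For a $p$-module $B$, $\mathrm{type}(B)$ is the partition $\beta$ with conjugate $\beta'_i=\dim_kp^{i-1}B/p^iB$. $\mathcal S$ is the category of embeddings $(A\subset B)$ of submodules in $p$-modules. Partitions are drawn with the $i$-th column of length equal to the $i$-th part, rows numbered from the top. Klein tableau of $E=(A\subset B)$, $e$ the exponent of $A$: $\Pi(E)=[\gamma^0,\ldots,\gamma^e;\varphi^2,\ldots,\varphi^e]$ with $\gamma^i=\mathrm{type}(B/p^iA)$, and $\varphi^\ell$ the unique map from the boxes of the skew diagram $\gamma^\ell\setminus\gamma^{\ell-1}$ to positive integers, weakly increasing from left to right in each row, such that for $r\ge1$ the number of boxes in row $m$ with value $r$ equals $(\gamma^{\ell,r})'_m-(\gamma^{\ell,r-1})'_m$, where $\gamma^{\ell,r}=\mathrm{type}\big(B/(p^\ell A+p(p^{\ell-2}A\cap p^rB))\big)$. Restriction: for $u\le\ell\le e$, $\Pi|_u^\ell=[\gamma^{\ell-u},\ldots,\gamma^\ell;\varphi^{\ell-u+2},\ldots,\varphi^\ell]$,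 regarded as a Klein tableau whose stripe $\gamma^{\ell-u+j}\setminus\gamma^{\ell-u+j-1}$ is labelled $j$, subscripts retained. *)

From HB Require Import structures.
From mathcomp Require Import all_boot all_order all_algebra.
Set Implicit Arguments. Unset Strict Implicit. Unset Printing Implicit Defensive.
Import GRing.Theory.

Definition is_ideal (R : idomainType) (I : R -> Prop) : Prop :=
  I 0%R /\ (forall x y, I x -> I y -> I (x + y)%R) /\
  (forall r x, I x -> I (r * x)%R).

Definition pideal (R : idomainType) (a : R) : R -> Prop :=
  fun x => exists r, x = (r * a)%R.

Definition is_PID (R : idomainType) : Prop :=
  forall I : R -> Prop, is_ideal I -> exists a, forall x, I x <-> pideal a x.

Definition maximal_gen (R : idomainType) (p : R) : Prop :=
  ~ pideal p 1%R /\
  forall I : R -> Prop, is_ideal I -> (forall x, pideal p x -> I x) ->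
    (forall x, I x -> pideal p x) \/ I 1%R.

Section Mod.
Variables (R : idomainType) (p : R) (V : lmodType R).

Definition is_submod (S : V -> Prop) : Prop :=
  S 0%R /\ (forall x y, S x -> S y -> S (x + y)%R) /\
  (forall (r : R) x, S x -> S (r *: x)%R).

Definition fullS : V -> Prop := fun _ => True.

Definition pmul (i : nat) (S : V -> Prop) : V -> Prop :=
  fun x => exists y, S y /\ x = (p ^+ i *: y)%R.

Definition addS (S T : V -> Prop) : V -> Prop :=
  fun x => exists y z, S y /\ T z /\ x = (y + z)%R.

Definition capS (S T : V -> Prop) : V -> Prop := fun x => S x /\ T x.

Definition strict_sub (S T : V -> Prop) : Prop :=
  (forall x, S x -> T x) /\ exists x, T x /\ ~ S x.

Definition finite_length : Prop :=
  exists n, forall c : nat -> (V -> Prop),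
    (forall i, is_submod (c i)) -> ~ (forall i, i < n -> strict_sub (c i) (c i.+1)).

Definition p_module : Prop :=
  finite_length /\ exists n, forall x : V, (p ^+ n *: x)%R = 0%R.

Definition exponent (A : V -> Prop) (e : nat) : Prop :=
  (forall a, A a -> (p ^+ e *: a)%R = 0%R) /\
  (forall e', e' < e -> exists a, A a /\ (p ^+ e' *: a)%R <> 0%R).

(* dim_k (M/N) = d, with k = R/(p): elements of M/N are represented by
   lifts in M, scalars of k by lifts in R.  The images of x_0..x_{d-1}
   are k-linearly independent in M/N iff  sum r_i x_i \in N  forces
   every r_i \in (p). *)
Definition kindep (M N : V -> Prop) (d : nat) (x : 'I_d -> V) : Prop :=
  (forall i, M (x i)) /\
  forall r : 'I_d -> R, N (\sum_(i < d) r i *: x i)%R -> forall i, pideal p (r i).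

Definition dimk (M N : V -> Prop) (d : nat) : Prop :=
  (exists x : 'I_d -> V, kindep M N x) /\ ~ (exists x : 'I_d.+1 -> V, kindep M N x).

End Mod.

Definition is_partition (b : seq nat) : bool :=
  sorted (fun x y => y <= x) b && all (fun x => 0 < x) b.

Definition conj_part (b : seq nat) (m : nat) : nat := count (fun x => m <= x) b.

(* box in row m, column c (1-indexed), the c-th column having length b_c *)
Definition in_diag (b : seq nat) (m c : nat) : bool :=
  (0 < c <= size b) && (0 < m <= nth 0 b c.-1).

Definition in_skew (g d : seq nat) (m c : nat) : bool := in_diag g m c && ~~ in_diag d m c.

Section Klein.
Variables (R : idomainType) (p : R) (V : lmodType R).

(* type(V/N) = b :  b'_j = dim_k p^{j-1}(V/N) / p^j(V/N), where
   p^j(V/N) is represented by its preimage p^j V + N in V. *)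
Definition type_quot (N : V -> Prop) (b : seq nat) : Prop :=
  is_partition b /\
  forall j, 0 < j ->
    dimk p (addS (pmul p j.-1 (@fullS _ V)) N) (addS (pmul p j (@fullS _ V)) N)
         (conj_part b j).

Definition NLR (A : V -> Prop) (l r : nat) : V -> Prop :=
  addS (pmul p l A) (pmul p 1 (capS (pmul p (l - 2) A) (pmul p r (@fullS _ V)))).

(* phi : (row, column) -> value is the filling of the skew diagram g \ d
   described in the definition of the Klein tableau, for index l *)
Definition klein_filling (A : V -> Prop) (l : nat) (g d : seq nat)
    (phi : nat -> nat -> nat) : Prop :=
  (forall m c, in_skew g d m c -> 0 < phi m c) /\
  (forall m c1 c2, in_skew g d m c1 -> in_skew g d m c2 -> c1 <= c2 ->
     phi m c1 <= phi m c2) /\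
  (forall r, 0 < r -> exists b1 b0,
     type_quot (NLR A l r) b1 /\ type_quot (NLR A l r.-1) b0 /\
     forall m, 0 < m ->
       count (fun c => in_skew g d m c && (phi m c == r)) (iota 1 (size g))
         + conj_part b0 m = conj_part b1 m).

Definition klein_tableau (A : V -> Prop) (e : nat) (gam : seq (seq nat))
    (phi : nat -> nat -> nat -> nat) : Prop :=
  exponent p A e /\ size gam = e.+1 /\
  (forall i, i <= e -> type_quot (pmul p i A) (nth [::] gam i)) /\
  (forall l, 2 <= l <= e ->
     klein_filling A l (nth [::] gam l) (nth [::] gam l.-1) (phi l)).

End Klein.

(* Restriction Pi|_u^l = [gamma^{l-u},...,gamma^l; phi^{l-u+2},...,phi^l],
   relabelled so that the stripe gamma^{l-u+j} \ gamma^{l-u+j-1} has label j;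
   the values of the fillings are retained. *)
Definition restr_gam (gam : seq (seq nat)) (u l : nat) : seq (seq nat) :=
  take u.+1 (drop (l - u) gam).

Definition restr_phi (phi : nat -> nat -> nat -> nat) (u l : nat) :
  nat -> nat -> nat -> nat := fun j => phi (j + (l - u)).

From mathcomp Require Import all_boot all_order all_algebra.
From mathcomp Require Import zify.
From Stdlib Require Import FunctionalExtensionality PropExtensionality.
Import GRing.Theory.

(* Since p^i (p^s A) = p^(i+s) A, every module entering the definition of the
   Klein tableau of (p^s A ⊂ B) -- the quotients B/p^i(p^s A) and the modules
   p^l(p^s A) + p(p^(l-2)(p^s A) ∩ p^r B) -- is the module of index i + s
   (resp. l + s) for (A ⊂ B).  So the tableau of the shifted embedding is the
   tableau of E with its first s entries dropped, which is the restriction. *)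

Section Shift.
Variables (R : idomainType) (p : R) (V : lmodType R).
Implicit Types A : V -> Prop.

Lemma pmul_pmul A i s : pmul p i (pmul p s A) = pmul p (i + s) A.
Proof.
apply: functional_extensionality => x; apply: propositional_extensionality.
split=> [[_ [[z [Az ->]] ->]] | [z [Az ->]]].
  by exists z; rewrite scalerA -exprD.
by exists (p ^+ s *: z)%R; split; [exists z | rewrite scalerA -exprD].
Qed.

Lemma exponent_pmul A e s :
  exponent p A e -> s <= e -> exponent p (pmul p s A) (e - s).
Proof.
move=> [annA minA] le_se; split=> [_ [a [Aa ->]] | e' lt_e'].
  by rewrite scalerA -exprD subnK //; apply: annA.
have [a [Aa nz_a]] := minA (e' + s) ltac:(lia).
by exists (p ^+ s *: a)%R; split; [exists a | rewrite scalerA -exprD].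
Qed.

Lemma NLR_pmul A s l : 2 <= l -> NLR p (pmul p s A) l = NLR p A (l + s).
Proof.
move=> le2l; apply: functional_extensionality => r.
by rewrite /NLR !pmul_pmul (_ : l - 2 + s = l + s - 2) //; lia.
Qed.

Lemma klein_filling_pmul A s l g d (phi : nat -> nat -> nat) : 2 <= l ->
  klein_filling p (pmul p s A) l g d phi = klein_filling p A (l + s) g d phi.
Proof. by move=> le2l; rewrite /klein_filling NLR_pmul. Qed.

End Shift.

Lemma nth_restr_gam (gam : seq (seq nat)) u l i :
  i <= u -> nth [::] (restr_gam gam u l) i = nth [::] gam (i + (l - u)).
Proof. by move=> le_iu; rewrite nth_take // nth_drop addnC. Qed.

Lemma size_restr_gam (gam : seq (seq nat)) u l :
  size gam = l.+1 -> u <= l -> size (restr_gam gam u l) = u.+1.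
Proof. by move=> szg le_ul; rewrite size_take size_drop szg; case: ltngtP; lia. Qed.

Theorem lemma6 (R : idomainType) (p : R) (V : lmodType R)
    (A : V -> Prop) (e s : nat) (gam : seq (seq nat))
    (phi : nat -> nat -> nat -> nat) :
  is_PID R -> maximal_gen p -> p_module p V -> is_submod A ->
  klein_tableau p A e gam phi -> s <= e ->
  klein_tableau p (pmul p s A) (e - s)
    (restr_gam gam (e - s) e) (restr_phi phi (e - s) e).
Proof.
move=> _ _ _ _ [expA [szg [typeA fillA]]] le_se.
have shift : e - (e - s) = s by rewrite subKn.
split; [exact: exponent_pmul | split; [exact: size_restr_gam (leq_subr _ _) |]].
split=> [i le_i | l /andP [le2l le_l]].
  by rewrite nth_restr_gam // shift pmul_pmul; apply: typeA; lia.
rewrite /restr_phi shift !nth_restr_gam ?shift; try lia.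
rewrite klein_filling_pmul // (_ : l.-1 + s = (l + s).-1); last lia.
by apply: fillA; apply/andP; split; lia.
Qed.
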